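(* Let $K$ be a field of any characteristic and let $I_A\subset K[x_1,\ldots,x_n]$ be a toric ideal of height $2$. Then $I_A$ is radical splittable if and only if $I_A$ is a set-theoretic complete intersection on binomials.
   Context: $A=\{{\bf a}_1,\ldots,{\bf a}_n\}\subset\mathbb{Z}^m$ with $\ker_{\mathbb{Z}}(A)\cap\mathbb{N}^n=\{{\bf 0}\}$; $I_A$ is the kernel of $K[x_1,\ldots,x_n]\to K[t_1^{\pm1},\ldots,t_m^{\pm1}]$, $x_i\mapsto{\bf t}^{{\bf a}_i}$. $\mathrm{bar}(I_A)$ is the smallest $t$ such that there exist binomials $B_1,\ldots,B_t\in I_A$ with $I_A=\mathrm{rad}(B_1,\ldots,B_t)$; $I_A$ is a set-theoretic complete intersection on binomials if $\mathrm{bar}(I_A)=\mathrm{ht}(I_A)$. $I_A$ is radical splittable if there exist toric ideals $I_{A_1},I_{A_2}\subset K[x_1,\ldots,x_n]$ with $I_A=\mathrm{rad}(I_{A_1}+I_{A_2})$ and $I_{A_i}\ne I_A$ for $i=1,2$. *)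

From HB Require Import structures.
From mathcomp Require Import all_boot all_order all_algebra.
From mathcomp Require Export mpoly.
Set Implicit Arguments. Unset Strict Implicit. Unset Printing Implicit Defensive.
Import Order.TTheory GRing.Theory Num.Theory.
Local Open Scope ring_scope.

Section Toric.
Variables (K : fieldType) (n : nat).
Notation P := {mpoly K[n]}.

Definition pset := P -> Prop.
Definition pset_eq (I J : pset) := forall f, I f <-> J f.
Definition psubset (I J : pset) := forall f, I f -> J f.

(* A configuration A = {a_1,...,a_n} in Z^m : a_i j = j-th coordinate of a_i. *)
Definition Aimg (m : nat) (A : 'I_n -> 'I_m -> int) (u : 'X_{1..n}) : 'rV[int]_m :=
  \row_j \sum_(i < n) ((u i)%:Z * A i j).

Definition positive_conf (m : nat) (A : 'I_n -> 'I_m -> int) :=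
  forall u : 'X_{1..n}, Aimg A u = 0 -> u = 0%MM.

(* I_A = kernel of K[x] -> K[t^{±1}] = K[Z^m], x_i |-> t^{a_i}: the image of
   f = sum_u c_u x^u is sum_u c_u t^{Au}, whose coefficient at t^w is
   sum_{u : Au = w} c_u. *)
Definition toric (m : nat) (A : 'I_n -> 'I_m -> int) : pset :=
  fun f => forall w : 'rV[int]_m,
    \sum_(u <- msupp f | Aimg A u == w) f@_u = 0.

Definition is_ideal (I : pset) :=
  I 0 /\ (forall f g, I f -> I g -> I (f + g)) /\ (forall r f, I f -> I (r * f)).

Definition is_prime_ideal (I : pset) :=
  is_ideal I /\ ~ I 1 /\ (forall f g, I (f * g) -> I f \/ I g).

Definition prime_chain_to (Q : pset) (h : nat) :=
  exists c : nat -> pset,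
    (forall i, (i <= h)%N -> is_prime_ideal (c i)) /\
    (forall i, (i < h)%N -> psubset (c i) (c i.+1) /\ ~ psubset (c i.+1) (c i)) /\
    pset_eq (c h) Q.

(* ht(I) = min { ht(Q) : Q prime, I ⊆ Q }, ht(Q) = sup of lengths of prime chains *)
Definition height (I : pset) (h : nat) :=
  (exists Q, is_prime_ideal Q /\ psubset I Q /\ ~ prime_chain_to Q h.+1) /\
  (forall Q, is_prime_ideal Q -> psubset I Q -> prime_chain_to Q h).

Definition radical (I : pset) : pset := fun f => exists k : nat, I (f ^+ k).

Definition gen_ideal (t : nat) (B : 'I_t -> P) : pset :=
  fun f => exists r : 'I_t -> P, f = \sum_(i < t) r i * B i.

Definition sum_ideal (I J : pset) : pset :=
  fun f => exists g h, I g /\ J h /\ f = g + h.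

Definition binomial (f : P) := exists u v : 'X_{1..n}, f = 'X_[u] - 'X_[v].

Definition bar_at (I : pset) (t : nat) :=
  exists B : 'I_t -> P, (forall i, binomial (B i) /\ I (B i)) /\
    pset_eq I (radical (gen_ideal B)).

Definition bar (I : pset) (t : nat) :=
  bar_at I t /\ forall t', (t' < t)%N -> ~ bar_at I t'.

Definition stci_binomials (I : pset) :=
  exists h, height I h /\ bar I h.

Definition radical_splittable (m : nat) (A : 'I_n -> 'I_m -> int) :=
  exists (m1 m2 : nat) (A1 : 'I_n -> 'I_m1 -> int) (A2 : 'I_n -> 'I_m2 -> int),
    positive_conf A1 /\ positive_conf A2 /\
    pset_eq (toric A) (radical (sum_ideal (toric A1) (toric A2))) /\
    ~ pset_eq (toric A1) (toric A) /\ ~ pset_eq (toric A2) (toric A).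

End Toric.

(* I_A is the kernel of x_i |-> t^(a_i), hence prime, and it is spanned by the
   binomials x^(v+) - x^(v-) with v in the lattice L_A = ker_Z(A); a toric ideal
   I_B lies in I_A exactly when L_B lies in L_A.  When L_B is a line it is cyclic,
   say Zg, and I_B is the principal ideal of x^(g+) - x^(g-), of height one.
   Since ht I_A = 2, a toric ideal I_B strictly inside I_A has a lattice of rank at
   most one (else 0 < I_line < I_B < I_A is too long), so it is principal on a
   binomial: a radical splitting writes I_A as the radical of two binomials.
   Conversely a binomial x^u - x^v of I_A lies in the toric ideal of the line
   through u - v, which is not I_A because I_A is not principal; two such binomials
   give a radical splitting.  Finally bar(I_A) >= 2: rad(0) = 0, and if
   I_A = rad(x^u - x^v), specialising x_i to X^(lam_i) along weights with
   lam.(u - v) = 0 shows that every lattice vector is proportional to u - v. *)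

From Pilot Require Import Defs.
From mathcomp Require Import all_boot all_order all_algebra.
From mathcomp Require Import mpoly.
From mathcomp Require Import zify ring.
From Stdlib Require Import Classical Wf_nat.
Set Implicit Arguments. Unset Strict Implicit. Unset Printing Implicit Defensive.
Import Order.TTheory GRing.Theory Num.Theory.
Local Open Scope ring_scope.
Local Notation "p %:F" := (@FracField.tofrac _ p).

Lemma fibre_sum0_transfer (V : nmodType) (X T1 T2 : eqType) (s : seq X) (c : X -> V)
    (f1 : X -> T1) (f2 : X -> T2) :
  {in s &, forall x y, (f1 x == f1 y) = (f2 x == f2 y)} ->
  (forall a, \sum_(x <- s | f1 x == a) c x = 0) ->
  forall b, \sum_(x <- s | f2 x == b) c x = 0.
Proof.
move=> f12 sum1 b.
have [/hasP [y ys /eqP <-]|/hasPn nob] := boolP (has (fun y => f2 y == b) s).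
  rewrite -[RHS](sum1 (f1 y)) big_seq_cond [RHS]big_seq_cond; apply: eq_bigl => x.
  by case: (boolP (x \in s)) => //= xs; rewrite f12.
rewrite big_seq_cond big_pred0 // => x.
by apply/negbTE/andP => -[xs]; rewrite (negbTE (nob x xs)).
Qed.

Section Monomials.
Variables (R : nzRingType) (n : nat).
Notation P := {mpoly R[n]}.

Lemma mpolyX_neq0 (u : 'X_{1..n}) : ('X_[u] : P) != 0.
Proof.
apply/eqP => /(congr1 (mcoeff u)) /eqP.
by rewrite mcoeffX eqxx mcoeff0 oner_eq0.
Qed.

Lemma mcoeff_sumX (X : eqType) (s : seq X) (c : X -> R) (e : X -> 'X_{1..n}) u :
  (\sum_(x <- s) c x *: 'X_[e x] : P)@_u = \sum_(x <- s | e x == u) c x.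
Proof.
rewrite raddf_sum [RHS]big_mkcond /=; apply: eq_bigr => x _.
by rewrite mcoeffZ mcoeffX; case: eqP; rewrite ?mulr1 ?mulr0.
Qed.

Lemma sumX_eq0 (X : eqType) (s : seq X) (c : X -> R) (e : X -> 'X_{1..n}) :
  (\sum_(x <- s) c x *: 'X_[e x] : P) = 0 <->
  forall u, \sum_(x <- s | e x == u) c x = 0.
Proof.
split=> [s0 u|s0]; first by rewrite -mcoeff_sumX s0 mcoeff0.
by apply/mpolyP => u; rewrite mcoeff_sumX s0 mcoeff0.
Qed.

Lemma mpolyX_inj : injective (fun u : 'X_{1..n} => ('X_[u] : P)).
Proof.
move=> a b /(congr1 (mcoeff a)); rewrite !mcoeffX eqxx.
by case: eqP => [-> //|_ /eqP]; rewrite oner_eq0.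
Qed.

End Monomials.

Definition zpos (z : int) : nat := if 0 <= z then `|z|%N else 0.
Definition zneg (z : int) : nat := if z < 0 then `|z|%N else 0.

Lemma zposBzneg z : (zpos z)%:Z - (zneg z)%:Z = z.
Proof. by rewrite /zpos /zneg; case: z => k /=; lia. Qed.

Section Lattice.
Variables (n m : nat) (A : 'I_n -> 'I_m -> int).

Definition kerz (v : 'I_n -> int) := forall j, \sum_(i < n) v i * A i j = 0.

Definition mdiff (a b : 'X_{1..n}) (i : 'I_n) : int := (a i)%:Z - (b i)%:Z.
Definition mpos (v : 'I_n -> int) : 'X_{1..n} := [multinom zpos (v i) | i < n].
Definition mneg (v : 'I_n -> int) : 'X_{1..n} := [multinom zneg (v i) | i < n].

Lemma mdiff_posneg v i : mdiff (mpos v) (mneg v) i = v i.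
Proof. by rewrite /mdiff !mnmE zposBzneg. Qed.

Lemma kerz_lin a b v w : kerz v -> kerz w -> kerz (fun i => a * v i + b * w i).
Proof.
move=> kv kw j; rewrite (eq_bigr (fun i => a * (v i * A i j) + b * (w i * A i j))).
  by rewrite big_split /= -!mulr_sumr kv kw !mulr0 addr0.
by move=> i _; rewrite mulrDl !mulrA.
Qed.

Lemma Aimg0 : Aimg A 0%MM = 0.
Proof. by apply/rowP => j; rewrite !mxE big1 // => i _; rewrite mnm0E mul0r. Qed.

Lemma Aimg_eqE a b : Aimg A a = Aimg A b <-> kerz (mdiff a b).
Proof.
have E j : \sum_(i < n) mdiff a b i * A i j = Aimg A a 0 j - Aimg A b 0 j.
  by rewrite !mxE -sumrB; apply: eq_bigr => i _; rewrite mulrBl.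
split=> [ab j|ab]; first by rewrite E ab subrr.
by apply/rowP => j; apply/eqP; rewrite -subr_eq0 -E ab.
Qed.

Lemma mdiff_neq0 a b : a != b -> exists i, mdiff a b i != 0.
Proof.
move=> ab; apply/existsP; apply: contraR ab; rewrite negb_exists => /forallP ab0.
by apply/eqP/mnmP => i; move: (ab0 i); rewrite negbK /mdiff => /eqP; lia.
Qed.

Lemma Aimg_posnegE v : Aimg A (mpos v) = Aimg A (mneg v) <-> kerz v.
Proof.
rewrite Aimg_eqE /kerz.
by split=> kv j; rewrite -[RHS](kv j); apply: eq_bigr => i _; rewrite mdiff_posneg.
Qed.

End Lattice.

Section ToricMap.
Variables (K : fieldType) (n m : nat) (A : 'I_n -> 'I_m -> int).
Notation P := {mpoly K[n]}.
Notation F := {fraction {mpoly K[m]}}.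

Definition Apos1 i : 'X_{1..m} := [multinom zpos (A i j) | j < m].
Definition Aneg1 i : 'X_{1..m} := [multinom zneg (A i j) | j < m].
Definition Apos (u : 'X_{1..n}) := (\sum_(i < n) Apos1 i *+ u i)%MM.
Definition Aneg (u : 'X_{1..n}) := (\sum_(i < n) Aneg1 i *+ u i)%MM.

(* K[t^{+-1}] is modelled inside the fraction field of K[t_1..t_m]:
   x_i is sent to t^(a_i^+) / t^(a_i^-). *)
Definition toric_map : {rmorphism P -> F} :=
  mmap (@FracField.tofrac _ \o @mpolyC m K)
       (fun i => 'X_[Apos1 i]%:F / 'X_[Aneg1 i]%:F).

Lemma AposBAneg u j : (Apos u j)%:Z - (Aneg u j)%:Z = Aimg A u 0 j.
Proof.
rewrite /Apos /Aneg !mnm_sumE mxE -!natz !natr_sum -sumrB; apply: eq_bigr => i _.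
by rewrite !mulmnE !mnmE !natz !PoszM -mulrBl zposBzneg mulrC.
Qed.

Lemma toric_mapX u : toric_map 'X_[u] = 'X_[Apos u]%:F / 'X_[Aneg u]%:F.
Proof.
rewrite /toric_map /= mmapX /mmap1 /Apos /Aneg -!mprodXnE !rmorph_prod.
rewrite -prodfV -big_split; apply: eq_bigr => i _ /=.
by rewrite exprMn exprVn !rmorphXn.
Qed.

Lemma toric_mapC c : toric_map c%:MP = (c%:MP)%:F.
Proof. exact: mmapC. Qed.

Lemma toric_map_clear f (D : 'X_{1..m}) :
  (forall u, u \in msupp f -> (Aneg u <= D)%MM) ->
  toric_map f * 'X_[D]%:F =
  (\sum_(u <- msupp f) f@_u *: 'X_[Apos u + (D - Aneg u)])%:F.
Proof.
move=> leD; rewrite {1}(mpolyE f) !rmorph_sum mulr_suml; apply/eq_big_seq => u uf.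
rewrite -!mul_mpolyC !rmorphM -{1}(submK (leD u uf)) addmC toric_mapX toric_mapC.
have nz : 'X_[Aneg u]%:F != 0 :> F by rewrite tofrac_eq0 mpolyX_neq0.
by rewrite !mpolyXD !rmorphM -!mulrA mulKf.
Qed.

Lemma Aimg_shiftE (D : 'X_{1..m}) u u' : (Aneg u <= D)%MM -> (Aneg u' <= D)%MM ->
  (Apos u + (D - Aneg u) == Apos u' + (D - Aneg u'))%MM = (Aimg A u == Aimg A u').
Proof.
move=> /mnm_lepP le /mnm_lepP le'; apply/eqP/eqP => [E|E].
  apply/rowP => j; rewrite -!AposBAneg.
  have := congr1 (fun x : 'X_{1..m} => (x j)%:Z) E; rewrite /= !mnmDE !mnmBE.
  by move: (le j) (le' j); lia.
apply/mnmP => j; rewrite !mnmDE !mnmBE.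
have := congr1 (fun x : 'rV[int]_m => x 0 j) E; rewrite /= -!AposBAneg.
by move: (le j) (le' j); lia.
Qed.

Lemma toric_map_eq0 f : toric_map f = 0 <-> toric A f.
Proof.
pose D := (\sum_(u <- msupp f) Aneg u)%MM.
have leD u : u \in msupp f -> (Aneg u <= D)%MM.
  by move=> uf; apply/mnm_lepP => j; rewrite /D (big_rem u uf) /= mnmDE leq_addr.
have nzD : 'X_[D]%:F != 0 :> F by rewrite tofrac_eq0 mpolyX_neq0.
split=> [f0|fA].
  have /sumX_eq0 : (\sum_(u <- msupp f) f@_u *: 'X_[Apos u + (D - Aneg u)]) = 0.
    by apply/eqP; rewrite -tofrac_eq0 -toric_map_clear // f0 mul0r.
  move=> s0 w; apply: (fibre_sum0_transfer _ s0) => u u' uf u'f.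
  exact: Aimg_shiftE (leD _ uf) (leD _ u'f).
apply/eqP; rewrite -(mulIr_eq0 _ (mulIf nzD)) toric_map_clear // tofrac_eq0.
apply/eqP/sumX_eq0; apply: fibre_sum0_transfer fA => u u' uf u'f.
by rewrite Aimg_shiftE ?leD.
Qed.

End ToricMap.

Section Ideals.
Variables (K : fieldType) (n : nat).
Notation P := {mpoly K[n]}.
Notation pset := (pset K n).
Implicit Types (I J : pset).

Definition zero_ideal : pset := fun f => f = 0.
Definition principal (p : P) : pset := fun f => exists q, f = q * p.

Lemma ideal_sum J (X : Type) (s : seq X) (p : pred X) (G : X -> P) :
  is_ideal J -> (forall x, p x -> J (G x)) -> J (\sum_(x <- s | p x) G x).
Proof.
move=> [J0 [JD _]] JG; elim: s => [|x s IHs]; first by rewrite big_nil.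
by rewrite big_cons; case: ifP => // px; apply: JD (JG x px) IHs.
Qed.

Lemma prime_idealX I f k : is_prime_ideal I -> I (f ^+ k) -> I f.
Proof.
move=> [_ [I1 IM]]; elim: k => [|k IHk]; first by rewrite expr0 => /I1.
by rewrite exprS => /IM [].
Qed.

Lemma zero_prime : is_prime_ideal zero_ideal.
Proof.
split; first by split=> //; split=> [f g -> ->|r f ->]; rewrite ?addr0 ?mulr0.
split; first by move/eqP; rewrite oner_eq0.
by move=> f g /eqP; rewrite mulf_eq0 => /orP [] /eqP; [left|right].
Qed.

Lemma principal_ideal p : is_ideal (principal p).
Proof.
split; first by exists 0; rewrite mul0r.
split=> [f g [q1 ->] [q2 ->]|r f [q ->]]; first by exists (q1 + q2); rewrite mulrDl.
by exists (r * q); rewrite mulrA.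
Qed.

Lemma gen_ideal0 (B : 'I_0 -> P) : pset_eq (gen_ideal B) zero_ideal.
Proof.
move=> f; split=> [[r ->]|->]; first by rewrite big_ord0.
by exists (fun _ => 0); rewrite big_ord0.
Qed.

Lemma gen_ideal1 (B : 'I_1 -> P) : pset_eq (gen_ideal B) (principal (B ord0)).
Proof.
move=> f; split=> [[r ->]|[q ->]]; first by exists (r ord0); rewrite big_ord1.
by exists (fun _ => q); rewrite big_ord1.
Qed.

Lemma gen_ideal2 (B : 'I_2 -> P) f :
  gen_ideal B f <-> exists q0 q1, f = q0 * B ord0 + q1 * B ord_max.
Proof.
have E : lift ord0 ord0 = ord_max :> 'I_2 by apply/val_inj.
split=> [[r ->]|[q0 [q1 ->]]].
  by exists (r ord0), (r ord_max); rewrite big_ord_recl big_ord1 E.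
by exists (fun i => if i == ord0 then q0 else q1); rewrite big_ord_recl big_ord1 E.
Qed.

Lemma radical_eq I J : pset_eq I J -> pset_eq (radical I) (radical J).
Proof. by move=> IJ f; split=> [[k /IJ]|[k /IJ]]; exists k. Qed.

End Ideals.

Arguments zero_ideal {K n}.

Definition binv (K : fieldType) n (v : 'I_n -> int) : {mpoly K[n]} :=
  'X_[mpos v] - 'X_[mneg v].

Section ToricIdeal.
Variables (K : fieldType) (n m : nat) (A : 'I_n -> 'I_m -> int).
Notation P := {mpoly K[n]}.
Notation I := (toric (K := K) A).

Lemma toric_ideal : is_ideal I.
Proof.
split; first by apply/toric_map_eq0; rewrite rmorph0.
split=> [f g /toric_map_eq0 f0 /toric_map_eq0 g0|r f /toric_map_eq0 f0].
  by apply/toric_map_eq0; rewrite rmorphD f0 g0 addr0.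
by apply/toric_map_eq0; rewrite rmorphM f0 mulr0.
Qed.

Lemma toric_prime : is_prime_ideal I.
Proof.
split; first exact: toric_ideal.
split; first by move/toric_map_eq0/eqP; rewrite rmorph1 oner_eq0.
move=> f g /toric_map_eq0/eqP; rewrite rmorphM mulf_eq0.
by case/orP => /eqP/toric_map_eq0; [left|right].
Qed.

Lemma toric_binomial a b : I ('X_[a] - 'X_[b]) <-> Aimg A a = Aimg A b.
Proof.
have nz u : ('X_[u] : {mpoly K[m]})%:F != 0 by rewrite tofrac_eq0 mpolyX_neq0.
rewrite -toric_map_eq0 rmorphB !toric_mapX; split=> [/eqP|ab].
  rewrite subr_eq0 eqr_div // -!rmorphM tofrac_eq -!mpolyXD => /eqP /mpolyX_inj E.
  apply/rowP => j; rewrite -!AposBAneg.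
  by have := congr1 (fun x : 'X_{1..m} => (x j)%:Z) E; rewrite /= !mnmDE; lia.
apply/eqP; rewrite subr_eq0 eqr_div // -!rmorphM tofrac_eq -!mpolyXD.
apply/eqP; congr mpolyX; apply/mnmP => j; rewrite !mnmDE.
by have := congr1 (fun x : 'rV[int]_m => x 0 j) ab; rewrite /= -!AposBAneg; lia.
Qed.

Lemma toric_binv v : I (binv K v) <-> kerz A v.
Proof. by rewrite toric_binomial Aimg_posnegE. Qed.

Lemma toric_binomial_span f J : I f -> is_ideal J ->
  (forall a b, Aimg A a = Aimg A b -> J ('X_[a] - 'X_[b])) -> J f.
Proof.
move=> fA idJ Jbin; set s := msupp f.
(* With r u a fixed representative of the fibre of u, the fibre sums of f
   vanish, so f = \sum_u f_u (x^u - x^(r u)). *)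
pose fibre u := [seq x <- s | Aimg A x == Aimg A u].
pose r u := head u (fibre u).
have r_fibre u : u \in s -> r u \in fibre u.
  move=> us; have : u \in fibre u by rewrite mem_filter eqxx.
  by rewrite /r; case: (fibre u) => //= x l _; rewrite mem_head.
have Aimg_r u : u \in s -> Aimg A (r u) = Aimg A u.
  by move/r_fibre; rewrite mem_filter => /andP [/eqP].
have r_eq u u' : u' \in s -> Aimg A u = Aimg A u' -> r u = r u'.
  by move=> u's E; have := r_fibre u' u's; rewrite /r /fibre E; case: [seq x <- s | _].
have fibre0 : (\sum_(u <- s) f@_u *: 'X_[r u] : P) = 0.
  apply/sumX_eq0; apply: (fibre_sum0_transfer _ fA) => u u' us u's.
  apply/eqP/eqP => [|ru]; first exact: r_eq.
  by rewrite -(Aimg_r u us) -(Aimg_r u' u's) ru.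
have -> : f = \sum_(u <- s) f@_u *: ('X_[u] - 'X_[r u]).
  by rewrite (eq_bigr _ (fun u _ => scalerBr _ _ _)) sumrB fibre0 subr0 -mpolyE.
rewrite big_seq; apply: ideal_sum => // u us.
by case: idJ => [_ [_ JM]]; rewrite -mul_mpolyC; apply/JM/Jbin; rewrite Aimg_r.
Qed.

End ToricIdeal.

Section LatticeBinomials.
Variables (K : fieldType) (n : nat).
Notation P := {mpoly K[n]}.

Lemma binv_dvd_nat (g : 'I_n -> int) a b (k : nat) :
  (forall i, mdiff a b i = k%:Z * g i) -> principal (binv K g) ('X_[a] - 'X_[b]).
Proof.
move=> abg; pose c := (a - mpos g *+ k)%MM.
have -> : a = (c + mpos g *+ k)%MM.
  apply/mnmP => i; rewrite mnmDE mnmBE mulmnE mnmE.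
  by move: (abg i); rewrite /mdiff /zpos; case: (g i) => z /=; nia.
have -> : b = (c + mneg g *+ k)%MM.
  apply/mnmP => i; rewrite mnmDE mnmBE !mulmnE !mnmE.
  by move: (abg i); rewrite /mdiff /zpos /zneg; case: (g i) => z /=; nia.
exists ('X_[c] * \sum_(i < k) 'X_[mpos g] ^+ (k.-1 - i) * 'X_[mneg g] ^+ i).
by rewrite !mpolyXD -!mpolyXn -mulrBr subrXX /binv -mulrA [_ * (_ - _)]mulrC.
Qed.

Lemma binv_dvd (g : 'I_n -> int) a b (k : int) :
  (forall i, mdiff a b i = k * g i) -> principal (binv K g) ('X_[a] - 'X_[b]).
Proof.
case: k => k abg; first exact: binv_dvd_nat.
have [q baq] : principal (binv K g) ('X_[b] - 'X_[a]).
  by apply: (@binv_dvd_nat g b a k.+1) => i; move: (abg i); rewrite /mdiff; lia.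
by exists (- q); rewrite mulNr -baq opprB.
Qed.

Lemma msize_binv_gt1 (g : 'I_n -> int) i : g i != 0 -> (1 < msize (binv K g))%N.
Proof.
move=> gi; have pn : mpos g != mneg g.
  by apply: contra gi => /eqP pn; rewrite -(mdiff_posneg g i) /mdiff pn subrr.
have [x [x0 xs]] : exists x, x != 0%MM /\ x \in msupp (binv K g).
  have [p0|p0] := eqVneq (mpos g) 0%MM.
    exists (mneg g); split; first by rewrite -p0 eq_sym.
    rewrite mcoeff_msupp /binv mcoeffB !mcoeffX eqxx (negbTE pn) sub0r oppr_eq0.
    exact: oner_neq0.
  exists (mpos g); split => //.
  rewrite mcoeff_msupp /binv mcoeffB !mcoeffX eqxx (eq_sym (mneg g)) (negbTE pn).
  by rewrite subr0 oner_neq0.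
by have := msize_mdeg_lt xs; move: x0; rewrite -mdeg_eq0; lia.
Qed.

Lemma weight_mdiffE (lam : 'I_n -> nat) (a b : 'X_{1..n}) :
  \sum_i (lam i)%:Z * mdiff a b i =
  (\sum_i lam i * a i)%N%:Z - (\sum_i lam i * b i)%N%:Z.
Proof.
rewrite -!natz !natr_sum -sumrB; apply: eq_bigr => i _.
by rewrite /mdiff mulrBr !natz !PoszM.
Qed.

(* Specialising x_i to X^(lam i) in K[X] kills x^u - x^v when lam.u = lam.v. *)
Lemma dvd_binomial_weight (lam : 'I_n -> nat) (a b u v : 'X_{1..n}) k (r : P) :
  ('X_[a] - 'X_[b]) ^+ k = r * ('X_[u] - 'X_[v]) ->
  \sum_i (lam i)%:Z * mdiff u v i = 0 -> \sum_i (lam i)%:Z * mdiff a b i = 0.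
Proof.
pose ev (p : P) : {poly K} := mmap (@polyC K) (fun i => 'X^(lam i)) p.
have evX x : ev 'X_[x] = 'X^(\sum_i lam i * x i).
  by rewrite /ev mmapX /mmap1 -prodrXr; apply: eq_bigr => i _; rewrite exprM.
move=> /(congr1 ev) E; rewrite !weight_mdiffE => /eqP; rewrite subr_eq0 eqz_nat => /eqP uv.
apply/eqP; rewrite subr_eq0 eqz_nat; apply/eqP; move: E.
rewrite /ev !rmorphXn !rmorphM !rmorphB /= -!/(ev _) !evX uv subrr mulr0.
move=> /eqP; rewrite expf_eq0 subr_eq0 => /andP [_ /eqP E].
have := congr1 (fun p : {poly K} => p`_(\sum_i lam i * a i)) E.
by rewrite /= !coefXn eqxx; case: eqP => // _ /eqP; rewrite oner_eq0.
Qed.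

End LatticeBinomials.

Lemma least_nat (Pd : nat -> Prop) d :
  Pd d -> exists d0, Pd d0 /\ forall d', Pd d' -> (d0 <= d')%N.
Proof.
move=> Pdd; have dec k : Pd k \/ ~ Pd k by apply: classic.
have [d0 [[Pd0 d0min] _]] :=
  dec_inh_nat_subset_has_unique_least_element Pd dec (ex_intro _ d Pdd).
by exists d0; split=> // d' /d0min /ssrnat.leP.
Qed.

Lemma sum_delta n (j : 'I_n) (x : 'I_n -> int) : \sum_(i < n) (i == j)%:Z * x i = x j.
Proof.
by rewrite (bigD1 j) //= eqxx mul1r big1 ?addr0 // => i /negbTE ->; rewrite mul0r.
Qed.

Section KernelLines.
Variables (n m : nat) (A : 'I_n -> 'I_m -> int).

Lemma kerz_mixed_sign w i : positive_conf A -> kerz A w -> w i != 0 ->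
  (exists i, 0 < w i) /\ (exists j, w j < 0).
Proof.
move=> pA /Aimg_posnegE pn wi.
have wi' : ~ (mpos w = 0%MM /\ mneg w = 0%MM).
  by move=> [p0 n0]; move/eqP: wi; apply; rewrite -(mdiff_posneg w i) /mdiff p0 n0 !mnm0E.
split; apply: NNPP => nos; apply: wi'.
  suff p0 : mpos w = 0%MM by split=> //; apply: pA; rewrite -pn p0 Aimg0.
  apply/mnmP => j; rewrite mnmE mnm0E /zpos.
  by case: (ltrP 0 (w j)) => [wj|]; [case: nos; exists j | case: (w j) => k /=; lia].
suff n0 : mneg w = 0%MM by split=> //; apply: pA; rewrite pn n0 Aimg0.
apply/mnmP => j; rewrite mnmE mnm0E /zneg.
by case: (ltrP (w j) 0) => // wj; case: nos; exists j.
Qed.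

Lemma kerz_cyclic w i0 : kerz A w -> w i0 != 0 ->
  (forall v, kerz A v -> forall j, v j * w i0 = v i0 * w j) ->
  exists g, [/\ kerz A g, g i0 != 0 &
                forall v, kerz A v -> exists k : int, forall i, v i = k * g i].
Proof.
move=> kw wi0 on_line.
(* the generator is a lattice vector with least positive i0-th entry *)
pose Pd d := (0 < d)%N /\ exists v, kerz A v /\ v i0 = d%:Z.
have Pw : Pd `|w i0|%N.
  split; first by rewrite absz_gt0.
  have [wpos|wneg] := ltrP 0 (w i0); first by exists w; rewrite gtz0_abs.
  exists (fun i => -1 * w i + 0 * w i); split; first exact: kerz_lin.
  by rewrite lez0_abs //; ring.
have [d [[d0 [g [kg gd]]] dmin]] := least_nat Pw.
exists g; split=> //; first by rewrite gd; lia.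
move=> v kv; pose q := (v i0 %/ d%:Z)%Z.
pose v' i := 1 * v i + (- q) * g i.
have v'i0 : v' i0 = (v i0 %% d%:Z)%Z.
  by rewrite /v' gd {1}(divz_eq (v i0) d%:Z); ring.
have r_ge0 : 0 <= v' i0 by rewrite v'i0; apply: modz_ge0; lia.
have r_lt : v' i0 < d%:Z by rewrite v'i0; apply: ltz_pmod; lia.
have r0 : v' i0 = 0.
  have [//|r_neq0] := eqVneq (v' i0) 0.
  have : (d <= `|v' i0|)%N.
    apply: dmin; split; first by rewrite absz_gt0.
    by exists v'; split; [exact: kerz_lin | rewrite gez0_abs].
  by move: r_lt r_ge0; lia.
exists q => i; have := on_line v' (kerz_lin _ _ kv kg) i.
by rewrite r0 mul0r => /eqP; rewrite mulf_eq0 (negbTE wi0) orbF /v' => /eqP; lia.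
Qed.

End KernelLines.

Section LineConfigurations.
Variable n : nat.

Definition line_conf (w : 'I_n -> int) (i0 : 'I_n) : 'I_n -> 'I_n -> int :=
  fun i j => (i == j)%:Z * w i0 - (i == i0)%:Z * w j.

Lemma kerz_line_conf w i0 v :
  kerz (line_conf w i0) v <-> forall j, v j * w i0 = v i0 * w j.
Proof.
have E j : \sum_i v i * line_conf w i0 i j = v j * w i0 - v i0 * w j.
  rewrite -(sum_delta j (fun i => v i * w i0)) -(sum_delta i0 (fun i => v i * w j)).
  by rewrite -sumrB; apply: eq_bigr => i _; rewrite /line_conf; ring.
by split=> vw j; [apply/eqP; rewrite -subr_eq0 -E vw | rewrite E vw subrr].
Qed.

Lemma kerz_line_conf_sub m (B : 'I_n -> 'I_m -> int) w i0 v :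
  kerz B w -> w i0 != 0 -> kerz (line_conf w i0) v -> kerz B v.
Proof.
move=> kw wi0 /kerz_line_conf vw j; apply/eqP.
rewrite -(mulIr_eq0 _ (mulIf wi0)) mulr_suml.
rewrite (eq_bigr (fun i => v i0 * (w i * B i j))) => [|i _].
  by rewrite -mulr_sumr kw mulr0.
by rewrite mulrAC vw -mulrA.
Qed.

Lemma line_conf_positive w i0 : (exists i, 0 < w i) -> (exists j, w j < 0) ->
  w i0 != 0 -> positive_conf (line_conf w i0).
Proof.
move=> [ip wip] [jn wjn] wi0 u.
rewrite -(Aimg0 (line_conf w i0)) Aimg_eqE kerz_line_conf /mdiff => uw.
have {}uw j : (u j)%:Z * w i0 = (u i0)%:Z * w j by move: (uw j); rewrite !mnm0E; lia.
have ui0 : (u i0)%:Z = 0.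
  by case: (ltrgtP (w i0) 0) wi0 => // wi _; [move: (uw ip) | move: (uw jn)]; nia.
apply/mnmP => j; rewrite mnm0E; move: (uw j); rewrite ui0 mul0r => /eqP.
by rewrite mulf_eq0 (negbTE wi0) orbF => /eqP; lia.
Qed.

Definition id_conf : 'I_n -> 'I_n -> int := fun i j => (i == j)%:Z.

Lemma kerz_id_conf v : kerz id_conf v -> forall i, v i = 0.
Proof.
by move=> kv i; rewrite -(kv i) -sum_delta; apply: eq_bigr => l _; rewrite mulrC.
Qed.

Lemma id_conf_positive : positive_conf id_conf.
Proof.
move=> u; rewrite -(Aimg0 id_conf) Aimg_eqE => /kerz_id_conf u0.
by apply/mnmP => i; move: (u0 i); rewrite /mdiff mnm0E; lia.
Qed.

Definition weight2 (i j : 'I_n) (a b : nat) (l : 'I_n) := ((l == i) * a + (l == j) * b)%N.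

Lemma sum_weight2 i j a b (x : 'I_n -> int) :
  \sum_l (weight2 i j a b l)%:Z * x l = a%:Z * x i + b%:Z * x j.
Proof.
rewrite -(sum_delta i (fun l => a%:Z * x l)) -(sum_delta j (fun l => b%:Z * x l)).
by rewrite -big_split; apply: eq_bigr => l _; rewrite /weight2 /= PoszD !PoszM; ring.
Qed.

(* Two-point weights lam = |w_j| e_i + |w_i| e_j with w_i > 0 > w_j test all
   2x2 minors of (w, v). *)
Lemma proportional_of_weights (w v : 'I_n -> int) i0 :
  0 < w i0 -> (exists k, w k < 0) ->
  (forall lam : 'I_n -> nat,
     \sum_i (lam i)%:Z * w i = 0 -> \sum_i (lam i)%:Z * v i = 0) ->
  forall j, v j * w i0 = v i0 * w j.
Proof.
move=> wi0 [k wk] wv.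
have minor i j : 0 < w i -> w j < 0 -> v i * w j = v j * w i.
  move=> wi wj; have := wv (weight2 i j `|w j|%N `|w i|%N).
  rewrite !sum_weight2 (gtz0_abs wi) (ltz0_abs wj) => vw.
  have e : - w j * v i + w i * v j = 0 by apply: vw; ring.
  by apply/eqP; rewrite -subr_eq0; apply/eqP; rewrite -oppr0 -e; ring.
have zero i : w i = 0 -> v i = 0.
  by move=> wi; move: (wv (weight2 i i 1 0)); rewrite !sum_weight2 wi; lia.
move=> j; case: (ltrgtP (w j) 0) => wj.
- by rewrite (minor i0 j wi0 wj).
- have wk0 : w k != 0 by rewrite lt_eqF.
  apply: (mulIf wk0); rewrite -mulrA [w i0 * _]mulrC mulrA (minor j k wj wk).
  by rewrite -[RHS]mulrA [w j * _]mulrC [RHS]mulrA (minor i0 k wi0 wk); ring.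
- by rewrite (zero j wj) wj; ring.
Qed.

End LineConfigurations.

Arguments id_conf {n}.

Section Chains.
Variables (K : fieldType) (n : nat).
Notation P := {mpoly K[n]}.
Notation pset := (pset K n).
Implicit Types (I Q : pset).

Lemma prime_chain_trunc Q k j : prime_chain_to Q k -> (j <= k)%N -> prime_chain_to Q j.
Proof.
move=> [c [cP [cS cQ]]] jk; exists (fun i => c (i + (k - j))%N).
split; [|split]; last by rewrite subnKC.
- by move=> i ij; apply: cP; lia.
- by move=> i ij; rewrite addSn; apply: cS; lia.
Qed.

Lemma prime_chain_extend I Q k : prime_chain_to I k -> is_prime_ideal Q ->
  psubset I Q -> prime_chain_to Q k.
Proof.
move=> [c [cP [cS cI]]] pQ IQ.
have [QI|QnI] := classic (psubset Q I).
  by exists c; split=> //; split=> // f; split=> [/cI/IQ|/QI/cI].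
exists (fun i => if (i < k)%N then c i.+1 else Q); split; [|split].
- by move=> i ik; case: ifP => // ik'; apply: cP.
- move=> i ik; rewrite ik; case: ifP => [ik'|/negbT]; first exact: cS.
  rewrite -leqNgt => ki; have -> : i.+1 = k by lia.
  by split=> [f /cI/IQ //|cQ]; apply: QnI => f /cQ/cI.
- by rewrite ltnn.
Qed.

Lemma height_unique I h1 h2 : height I h1 -> height I h2 -> h1 = h2.
Proof.
move=> [[Q1 [pQ1 [IQ1 nQ1]]] all1] [[Q2 [pQ2 [IQ2 nQ2]]] all2].
case: (ltngtP h1 h2) => // h12; exfalso.
  by apply: nQ1; apply: prime_chain_trunc (all2 _ pQ1 IQ1) _.
by apply: nQ2; apply: prime_chain_trunc (all1 _ pQ2 IQ2) _.
Qed.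

Lemma prime_chain3 Q0 Q1 Q2 Q3 :
  [/\ is_prime_ideal Q0, is_prime_ideal Q1, is_prime_ideal Q2 & is_prime_ideal Q3] ->
  [/\ psubset Q0 Q1, psubset Q1 Q2 & psubset Q2 Q3] ->
  [/\ ~ psubset Q1 Q0, ~ psubset Q2 Q1 & ~ psubset Q3 Q2] ->
  prime_chain_to Q3 3.
Proof.
move=> [p0 p1 p2 p3] [s01 s12 s23] [n10 n21 n32].
exists (fun i => match i with 0 => Q0 | 1 => Q1 | 2 => Q2 | _ => Q3 end)%N.
by split; [case=> [|[|[|[|]]]] | split; [case=> [|[|[|]]] |]].
Qed.

Lemma no_chain_to_zero k : ~ prime_chain_to (@zero_ideal K n) k.+1.
Proof.
move=> [c [cP [cS c0]]]; have [_ []] := cS k (ltnSn k).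
by move=> f /c0 ->; case: (cP k (leqnSn k)) => [[]].
Qed.

Lemma prime_sub_principal Q (p : P) : is_prime_ideal Q ->
  psubset Q (principal p) -> ~ Q p -> (1 < msize p)%N -> psubset Q zero_ideal.
Proof.
move=> [_ [_ Qprime]] Qp pnQ p1.
have p0 : p != 0 by apply: contraTneq p1 => ->; rewrite mmeasure0.
suff msize_ind N g : (msize g < N)%N -> Q g -> g = 0 by move=> g; apply: msize_ind.
elim: N g => [|N IHN] g // gN Qg; have [q gq] := Qp g Qg.
have Qq : Q q by case: (Qprime q p) => //; rewrite -gq.
have [q0|q0] := eqVneq q 0; first by rewrite gq q0 mul0r.
suff : q = 0 by move/eqP; rewrite (negbTE q0).
by apply: IHN Qq; move: gN; rewrite gq msizeM //; move: (msize q) (msize p) p1 => a b; lia.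
Qed.

Lemma no_chain2_principal I (p : P) :
  pset_eq I (principal p) -> (1 < msize p)%N -> ~ prime_chain_to I 2.
Proof.
move=> Ip p1 [c [cP [cS cI]]].
have pn1 : ~ c 1%N p.
  move=> c1p; have [_ []] := cS 1%N isT; move=> f /cI/Ip [q ->].
  by case: (cP 1%N isT) => [[_ [_ cM]] _]; apply: cM.
have c1p : psubset (c 1%N) (principal p) by move=> f /(proj1 (cS 1%N isT))/cI/Ip.
have c10 := prime_sub_principal (cP 1%N isT) c1p pn1 p1.
apply: (@no_chain_to_zero 0); exists c; split; [|split].
- by move=> i i1; apply: cP; lia.
- by move=> i i1; apply: cS; lia.
- by move=> f; split=> [/c10 //|->]; case: (cP 1%N isT) => [[]].
Qed.

End Chains.

Section ToricComparison.
Variables (K : fieldType) (n m : nat) (A : 'I_n -> 'I_m -> int).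
Notation I := (toric (K := K) A).

Lemma toric_subsetE m' (B : 'I_n -> 'I_m' -> int) :
  psubset (toric (K := K) B) I <-> (forall v, kerz B v -> kerz A v).
Proof.
split=> [BA v /(toric_binv K) /BA /toric_binv //|BA f fB].
apply: (toric_binomial_span fB (toric_ideal K A)) => a b.
by move/Aimg_eqE/BA/Aimg_eqE/toric_binomial.
Qed.

Lemma toric_eq0 : (forall v, kerz A v -> forall i, v i = 0) -> pset_eq I zero_ideal.
Proof.
move=> ker0 f; split=> [fA|->]; last by case: (toric_ideal K A).
apply: (toric_binomial_span fA (zero_prime K n).1) => a b /Aimg_eqE/ker0 ab0.
suff -> : a = b by rewrite subrr.
by apply/mnmP => i; move: (ab0 i); rewrite /mdiff; lia.
Qed.

Lemma toric_principal g : kerz A g ->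
  (forall v, kerz A v -> exists k : int, forall i, v i = k * g i) ->
  pset_eq I (principal (binv K g)).
Proof.
move=> kg ker_g f; split=> [fA|[q ->]].
  apply: (toric_binomial_span fA (principal_ideal _)) => a b /Aimg_eqE/ker_g [k abg].
  exact: binv_dvd.
by case: (toric_ideal K A) => [_ [_ IM]]; apply/IM/toric_binv.
Qed.

Lemma toric_line_principal w i0 : kerz A w -> w i0 != 0 ->
  (forall v, kerz A v -> kerz (line_conf w i0) v) ->
  exists g, [/\ (1 < msize (binv K g))%N, I (binv K g) & pset_eq I (principal (binv K g))].
Proof.
move=> kw wi0 on_line.
have on_line' v : kerz A v -> forall j, v j * w i0 = v i0 * w j.
  by move/on_line/kerz_line_conf.
have [g [kg gi0 ker_g]] := kerz_cyclic kw wi0 on_line'.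
exists g; split; [exact: msize_binv_gt1 gi0 | exact/toric_binv | exact: toric_principal].
Qed.

End ToricComparison.

Section HeightTwo.
Variables (K : fieldType) (n m : nat) (A : 'I_n -> 'I_m -> int).
Hypothesis pA : positive_conf A.
Hypothesis hA : height (toric (K := K) A) 2.
Notation P := {mpoly K[n]}.
Notation I := (toric (K := K) A).

Lemma toric_chain2 : prime_chain_to I 2.
Proof. by case: hA => _; apply; [exact: toric_prime | move=> f]. Qed.

Lemma toric_neq0 : ~ pset_eq I zero_ideal.
Proof.
move=> I0; have [c [cP [cS cI]]] := toric_chain2; apply: (@no_chain_to_zero K n 1).
by exists c; do 2!split=> //; move=> f; split=> [/cI/I0|/I0/cI].
Qed.

Lemma toric_not_principal (p : P) : (1 < msize p)%N -> ~ pset_eq I (principal p).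
Proof. by move=> p1 Ip; apply: (no_chain2_principal Ip p1 toric_chain2). Qed.

Lemma kerz_not_sub_line w i0 : kerz A w -> w i0 != 0 ->
  ~ (forall v, kerz A v -> kerz (line_conf w i0) v).
Proof.
move=> kw wi0 on_line; have [g [g1 _ Ig]] := toric_line_principal K kw wi0 on_line.
exact: toric_not_principal g1 Ig.
Qed.

Lemma not_bar_at0 : ~ bar_at I 0.
Proof.
move=> [B [_ IB]]; apply: toric_neq0 => f; rewrite IB.
split=> [[k /gen_ideal0 /eqP]|->]; first by rewrite expf_eq0 => /andP [_ /eqP].
by exists 1%N; apply/gen_ideal0; rewrite expr1.
Qed.

Lemma not_bar_at1 : ~ bar_at I 1.
Proof.
move=> [B [Bbin IB]]; have [[u [v Buv]] IB0] := Bbin ord0.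
have rad_B f : I f -> exists k r, f ^+ k = r * ('X_[u] - 'X_[v]).
  by move=> /IB [k /gen_ideal1 [r]]; rewrite Buv => fk; exists k, r.
have [uv|uv] := eqVneq u v.
  apply: toric_neq0 => f; split=> [/rad_B [k [r]]|->]; last by case: (toric_ideal K A).
  by rewrite uv subrr mulr0 => /eqP; rewrite expf_eq0 => /andP [_ /eqP].
have kw : kerz A (mdiff u v) by apply/Aimg_eqE/(toric_binomial K); rewrite -Buv.
have [i wi] := mdiff_neq0 uv.
have [[i0 wi0] wneg] := kerz_mixed_sign pA kw wi.
apply: (kerz_not_sub_line kw (lt0r_neq0 wi0)) => v' kv'; apply/kerz_line_conf.
apply: proportional_of_weights wi0 wneg _ => lam lam_w.
have [k [r Er]] := rad_B _ (proj2 (toric_binv K A v') kv').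
have := dvd_binomial_weight Er lam_w.
by rewrite (eq_bigr (fun i => (lam i)%:Z * v' i)) // => l _; rewrite mdiff_posneg.
Qed.

Section ProperToricSubideal.
Variables (m' : nat) (B : 'I_n -> 'I_m' -> int).
Hypotheses (BI : psubset (toric (K := K) B) I) (BnI : ~ pset_eq (toric (K := K) B) I).

(* Otherwise 0 < I_line < I_B < I would be too long a chain below I. *)
Lemma proper_toric_line w i0 : kerz B w -> w i0 != 0 ->
  forall v, kerz B v -> kerz (line_conf w i0) v.
Proof.
move=> kw wi0 v kv; apply: NNPP => vnl.
have [[Q [pQ [IQ nQ]]] _] := hA; apply/nQ/(prime_chain_extend _ pQ IQ).
have w_line : kerz (line_conf w i0) w by apply/kerz_line_conf => j; rewrite mulrC.
apply: (@prime_chain3 K n zero_ideal (toric (line_conf w i0)) (toric B)).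
- by split; [exact: zero_prime | apply: toric_prime ..].
- split=> //; first by move=> f ->; case: (toric_ideal K (line_conf w i0)).
  by apply/toric_subsetE => u; apply: kerz_line_conf_sub.
split; last by move=> IB; apply: BnI => f; split; [apply: BI | apply: IB].
  move=> /(_ (binv K w) (proj2 (toric_binv K _ w) w_line)) /eqP.
  by apply/negP; rewrite -msize_poly_eq0 -lt0n; apply: ltnW (msize_binv_gt1 K wi0).
by move/toric_subsetE/(_ v kv).
Qed.

Lemma proper_toric_principal : exists p,
  [/\ Defs.binomial p, toric (K := K) B p & pset_eq (toric (K := K) B) (principal p)].
Proof.
have [[w [kw [i0 wi0]]]|ker0] := classic (exists w, kerz B w /\ exists i0, w i0 != 0);
    last first.
  exists 0; split; first by exists 0%MM, 0%MM; rewrite subrr.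
    by case: (toric_ideal K B).
  have {}ker0 v : kerz B v -> forall i, v i = 0.
    by move=> kv i; apply: NNPP => vi; apply: ker0; exists v; split=> //; exists i; apply/eqP.
  move=> f; rewrite (toric_eq0 (K := K) ker0 f); split=> [->|[q ->]]; last by rewrite mulr0.
  by exists 0; rewrite mulr0.
have [g [_ Bg Eg]] := toric_line_principal K kw wi0 (proper_toric_line kw wi0).
by exists (binv K g); split=> //; exists (mpos g), (mneg g).
Qed.

End ProperToricSubideal.

Lemma splittable_bar_at2 : radical_splittable K A -> bar_at I 2.
Proof.
move=> [m1 [m2 [A1 [A2 [_ [_ [IA [n1 n2]]]]]]]].
have [[T10 _] [T20 _]] := (toric_ideal K A1, toric_ideal K A2).
have sub1 : psubset (toric (K := K) A1) I.
  by move=> f f1; apply/IA; exists 1%N, f, 0; rewrite expr1 addr0.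
have sub2 : psubset (toric (K := K) A2) I.
  by move=> f f2; apply/IA; exists 1%N, 0, f; rewrite expr1 add0r.
have [p1 [b1 T1p1 E1]] := proper_toric_principal sub1 n1.
have [p2 [b2 T2p2 E2]] := proper_toric_principal sub2 n2.
pose B (i : 'I_2) := if i == ord0 then p1 else p2.
have sumE : pset_eq (sum_ideal (toric (K := K) A1) (toric (K := K) A2)) (gen_ideal B).
  move=> f; rewrite gen_ideal2; split=> [[g [h [/E1 [q1 ->] [/E2 [q2 ->] ->]]]]|].
    by exists q1, q2.
  move=> [q1 [q2 ->]]; exists (q1 * p1), (q2 * p2).
  by split; [apply/E1; exists q1 | split=> //; apply/E2; exists q2].
exists B; split=> [i|f]; last by rewrite IA; apply: radical_eq.
by rewrite /B; case: (i == ord0); split=> //; [apply: sub1 | apply: sub2].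
Qed.

Lemma binomial_in_proper_toric b : Defs.binomial b -> I b ->
  exists m1 (A1 : 'I_n -> 'I_m1 -> int), [/\ positive_conf A1,
    psubset (toric (K := K) A1) I, toric (K := K) A1 b & ~ pset_eq (toric (K := K) A1) I].
Proof.
move=> [u [v ->]] Ib; have [<-|uv] := eqVneq u v.
  exists n, id_conf; split.
  - exact: id_conf_positive.
  - apply/toric_subsetE => w /kerz_id_conf w0 j.
    by rewrite big1 // => i _; rewrite w0 mul0r.
  - by rewrite subrr; case: (toric_ideal K (@id_conf n)).
  - move=> E; apply: toric_neq0 => f; rewrite -(E f).
    exact: (toric_eq0 (K := K) (@kerz_id_conf n) f).
have kw : kerz A (mdiff u v) by apply/Aimg_eqE/(toric_binomial K).
have [i wi] := mdiff_neq0 uv; have [wpos wneg] := kerz_mixed_sign pA kw wi.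
exists n, (line_conf (mdiff u v) i); split.
- exact: line_conf_positive.
- by apply/toric_subsetE => v'; apply: kerz_line_conf_sub.
- by apply/toric_binomial/Aimg_eqE/kerz_line_conf => j; rewrite mulrC.
- move=> E; apply: (kerz_not_sub_line kw wi) => v' /(toric_binv K) /E /toric_binv //.
Qed.

Lemma bar_at2_splittable : bar_at I 2 -> radical_splittable K A.
Proof.
move=> [B [Bbin IB]]; have [[b0 I0] [b1 I1]] := (Bbin ord0, Bbin ord_max).
have [m1 [A1 [p1 s1 t1 n1]]] := binomial_in_proper_toric b0 I0.
have [m2 [A2 [p2 s2 t2 n2]]] := binomial_in_proper_toric b1 I1.
exists m1, m2, A1, A2; do 2!split=> //; split=> // f; split.
  move=> /IB [k /gen_ideal2 [q0 [q1 fk]]]; exists k, (q0 * B ord0), (q1 * B ord_max).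
  have [[_ [_ M1]] [_ [_ M2]]] := (toric_ideal K A1, toric_ideal K A2).
  by split; [apply: M1 | split; [apply: M2 | ]].
move=> [k [g [h [Tg [Th fk]]]]]; apply: (prime_idealX (k := k) (toric_prime K A)).
by rewrite fk; case: (toric_ideal K A) => [_ [ID _]]; apply: ID; [apply: s1 | apply: s2].
Qed.

End HeightTwo.

Theorem corollary4p2 (K : fieldType) (n m : nat) (A : 'I_n -> 'I_m -> int) :
  positive_conf A ->
  height (toric (K := K) A) 2 ->
  (radical_splittable K A <-> stci_binomials (toric (K := K) A)).
Proof.
move=> pA hA; split=> [split_A|[h [hI [barI _]]]].
  exists 2%N; split=> //; split; first exact: splittable_bar_at2.
  by case=> [|[|]] // _; [exact: not_bar_at0 | exact: not_bar_at1].
rewrite -(height_unique hA hI) in barI.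
exact: bar_at2_splittable.
Qed.
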